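(* Let $\Gamma,\Delta,\Pi,\Sigma$ be finite multisets of $\mathcal{L}_{A_m}^{\Box}$-formulas such that the sequent $\Gamma,\Pi\Rightarrow\Sigma,\Delta$ is $\mathsf{K(A)}$-valid and no variable occurs both in a formula of $\Gamma\uplus\Delta$ and in a formula of $\Pi\uplus\Sigma$. Then $\Gamma\Rightarrow\Delta$ and $\Pi\Rightarrow\Sigma$ are both $\mathsf{K(A)}$-valid.
   Context: $\mathcal{L}_{A_m}^{\Box}$-formulas are built from a countably infinite set $\mathrm{Var}$ of variables using binary $\to$ and unary $\Box$. Fix $p_0\in\mathrm{Var}$; $\overline{0}:=p_0\to p_0$, $\neg\varphi:=\varphi\to\overline{0}$, $\varphi\&\psi:=\neg\varphi\to\psi$. A $\mathsf{K(A)}$-model $\langle W,R,V\rangle$: nonempty $W$, $R\subseteq W\times W$, $V\colon\mathrm{Var}\times W\to[-r,r]$ for some real $r\ge0$, extended by $V(\varphi\to\psi,x)=V(\psi,x)-V(\varphi,x)$, $V(\Box\varphi,x)=\inf_{\mathbb{R}}\{V(\varphi,y):Rxy\}$ (empty infimum $=0$). A formula is $\mathsf{K(A)}$-valid if its value is $\ge0$ at every world of every model. A sequent $\Gamma\Rightarrow\Delta$ is an ordered pair of finite multisets of formulas; it is $\mathsf{K(A)}$-valid if $\mathcal{I}(\Gamma\Rightarrow\Delta)$ is, where $\mathcal{I}(\varphi_1,\dots,\varphi_n\Rightarrow\psi_1,\dots,\psi_m):=(\varphi_1\&\dots\&\varphi_n)\to(\psi_1\&\dots\&\psi_m)$, empty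 $\&$-combination $=\overline{0}$ (equivalently: $\sum_i V(\varphi_i,x)\le\sum_j V(\psi_j,x)$ everywhere). *)

From mathcomp Require Import all_boot all_order all_algebra.
From mathcomp Require Import classical_sets reals.
Set Implicit Arguments. Unset Strict Implicit. Unset Printing Implicit Defensive.
Import Order.TTheory GRing.Theory Num.Theory.
Local Open Scope classical_set_scope.
Local Open Scope ring_scope.

Inductive kform : Type :=
| Var : nat -> kform
| Imp : kform -> kform -> kform
| Box : kform -> kform.

Definition p0 : kform := Var 0.
Definition zero_f : kform := Imp p0 p0.
Definition neg_f (f : kform) : kform := Imp f zero_f.
Definition and_f (f g : kform) : kform := Imp (neg_f f) g.

(* phi_1 & ... & phi_n (right-nested), empty combination = 0bar *)
Fixpoint bigand (l : seq kform) : kform :=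
  match l with
  | [::] => zero_f
  | [:: f] => f
  | f :: l' => and_f f (bigand l')
  end.

Fixpoint vars (f : kform) : seq nat :=
  match f with
  | Var n => [:: n]
  | Imp a b => vars a ++ vars b
  | Box a => vars a
  end.

Definition vars_ms (l : seq kform) : seq nat := flatten (map vars l).

Record model (R : realType) := Model {
  world : Type;
  world_ne : inhabited world;
  acc : world -> world -> Prop;
  val : nat -> world -> R;
  val_bounded : exists r : R, 0 <= r /\ forall p x, - r <= val p x <= r
}.

Fixpoint eval (R : realType) (M : model R) (f : kform) (x : world M) : R :=
  match f with
  | Var p => @val R M p x
  | Imp a b => @eval R M b x - @eval R M a x
  | Box a => inf [set @eval R M a y | y in [set y | @acc R M x y]]
  end.

Definition valid (R : realType) (f : kform) : Prop :=
  forall (M : model R) (x : world M), 0 <= @eval R M f x.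

(* sequents: pairs of finite multisets, represented as lists *)
Definition seq_interp (G D : seq kform) : kform := Imp (bigand G) (bigand D).

Definition seq_valid (R : realType) (G D : seq kform) : Prop :=
  valid R (seq_interp G D).

(* Setting every variable outside a set P to 0 does not change the
   value of a formula whose variables lie in P, and makes every formula whose
   variables avoid P evaluate to 0 (a box over the constant 0 is 0, also over
   an empty set of successors).  Evaluating the valid sequent
   Gamma, Pi => Sigma, Delta in the model where only the variables of
   Gamma, Delta survive therefore yields Gamma => Delta at the original model,
   and symmetrically for Pi => Sigma. *)
From Pilot Require Import Defs.
From mathcomp Require Import all_boot all_order all_algebra.
From mathcomp Require Import classical_sets reals.
Set Implicit Arguments.
Unset Strict Implicit.

Import Order.TTheory GRing.Theory Num.Theory.
Local Open Scope classical_set_scope.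
Local Open Scope ring_scope.

Lemma vars_ms_cons (f : kform) (l : seq kform) :
  vars_ms (f :: l) = vars f ++ vars_ms l.
Proof. by []. Qed.

Lemma vars_ms_cat (l1 l2 : seq kform) :
  vars_ms (l1 ++ l2) = vars_ms l1 ++ vars_ms l2.
Proof. by rewrite /vars_ms map_cat flatten_cat. Qed.

Lemma inf_image_cst0 (R : realType) (T : Type) (A : set T) :
  inf [set (0 : R) | _ in A] = 0.
Proof.
have [->|/set0P [y Ay]] := eqVneq A set0; first by rewrite image_set0 inf0.
suff -> : [set (0 : R) | _ in A] = [set 0] by rewrite inf1.
by apply/seteqP; split=> z /=; [case=> _ _ <- | move=> ->; exists y].
Qed.

Section Restriction.
Variables (R : realType) (M : model R) (P : pred nat).

Lemma restrict_val_bounded : exists r : R, 0 <= r /\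
  forall p (x : world M), - r <= (if P p then Defs.val p x else 0) <= r.
Proof.
have [r [r_ge0 val_le]] := val_bounded M.
exists r; split=> // p x; case: (P p) => //.
by rewrite oppr_le0 r_ge0.
Qed.

Definition restrict : model R :=
  @Model R (world M) (world_ne M) (@acc R M)
    (fun p x => if P p then Defs.val p x else 0) restrict_val_bounded.

Lemma eval_restrict_in (f : kform) (x : world M) :
  all P (vars f) -> @eval R restrict f x = eval f x.
Proof.
elim: f x => [n|a IHa b IHb|a IHa] x /=.
- by rewrite andbT => ->.
- by rewrite all_cat => /andP[Pa Pb]; rewrite IHa ?IHb.
- by move=> Pa; congr (inf _); apply: eq_imagel => y _; apply: IHa.
Qed.

Lemma eval_restrict_out (f : kform) (x : world M) :
  all (predC P) (vars f) -> @eval R restrict f x = 0.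
Proof.
elim: f x => [n|a IHa b IHb|a IHa] x /=.
- by rewrite andbT => /negbTE ->.
- by rewrite all_cat => /andP[Pa Pb]; rewrite IHa ?IHb ?subr0.
- move=> Pa; rewrite -(@inf_image_cst0 R _ [set y | @acc R M x y]).
  by congr (inf _); apply: eq_imagel => y _; apply: IHa.
Qed.

Lemma sum_eval_restrict_in (l : seq kform) (x : world M) :
  all P (vars_ms l) ->
  \sum_(f <- l) @eval R restrict f x = \sum_(f <- l) eval f x.
Proof.
elim: l => [|f l IHl]; first by rewrite !big_nil.
by rewrite vars_ms_cons all_cat => /andP[Pf Pl]; rewrite !big_cons
  eval_restrict_in ?IHl.
Qed.

Lemma sum_eval_restrict_out (l : seq kform) (x : world M) :
  all (predC P) (vars_ms l) -> \sum_(f <- l) @eval R restrict f x = 0.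
Proof.
elim: l => [|f l IHl]; first by rewrite big_nil.
by rewrite vars_ms_cons all_cat => /andP[Pf Pl]; rewrite big_cons
  eval_restrict_out ?IHl ?addr0.
Qed.

End Restriction.

Section SequentValidity.
Variable R : realType.

Lemma eval_bigand (M : model R) (l : seq kform) (x : world M) :
  eval (bigand l) x = \sum_(f <- l) eval f x.
Proof.
elim: l => [|f [|g l] IHl] /=; first by rewrite big_nil subrr.
  by rewrite big_cons big_nil addr0.
by rewrite big_cons -IHl /= subrr sub0r opprK addrC.
Qed.

Lemma seq_validP (G D : seq kform) :
  seq_valid R G D <-> forall (M : model R) (x : world M),
    \sum_(f <- G) eval f x <= \sum_(f <- D) eval f x.
Proof.
by split=> valid_GD M x; have := valid_GD M x; rewrite /= !eval_bigand subr_ge0.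
Qed.

Lemma seq_valid_catC (G G' D D' : seq kform) :
  seq_valid R (G ++ G') (D ++ D') -> seq_valid R (G' ++ G) (D' ++ D).
Proof.
move=> /seq_validP valid_cat; apply/seq_validP => M x.
have := valid_cat M x; rewrite !big_cat /=.
by rewrite [X in X <= _]addrC [X in _ <= X]addrC.
Qed.

Lemma seq_valid_disjoint_cat (G D G' D' : seq kform) :
  seq_valid R (G ++ G') (D' ++ D) ->
  (forall p : nat, p \in vars_ms (G' ++ D') -> p \notin vars_ms (G ++ D)) ->
  seq_valid R G D.
Proof.
move=> /seq_validP valid_cat disjoint; apply/seq_validP => M x.
pose P : pred nat := fun p => p \in vars_ms (G ++ D).
have P_GD : all P (vars_ms G) && all P (vars_ms D).
  by rewrite -all_cat -vars_ms_cat; apply/allP.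
have notP_GD' : all (predC P) (vars_ms G') && all (predC P) (vars_ms D').
  by rewrite -all_cat -vars_ms_cat; apply/allP => p /disjoint.
case/andP: P_GD => P_G P_D; case/andP: notP_GD' => notP_G' notP_D'.
have := valid_cat (restrict M P) x.
rewrite !big_cat /= (sum_eval_restrict_out x notP_G') (sum_eval_restrict_out x notP_D').
by rewrite (sum_eval_restrict_in x P_G) (sum_eval_restrict_in x P_D) addr0 add0r.
Qed.

End SequentValidity.

Theorem lemma4p7 (R : realType) (Gamma Delta Pi Sigma : seq kform) :
  seq_valid R (Gamma ++ Pi) (Sigma ++ Delta) ->
  (forall p : nat, p \in vars_ms (Gamma ++ Delta) -> p \notin vars_ms (Pi ++ Sigma)) ->
  seq_valid R Gamma Delta /\ seq_valid R Pi Sigma.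
Proof.
move=> valid_cat disjoint; split.
- apply: (seq_valid_disjoint_cat valid_cat) => p p_PiSigma.
  by apply/negP => /disjoint; rewrite p_PiSigma.
- exact: seq_valid_disjoint_cat (seq_valid_catC valid_cat) disjoint.
Qed.
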